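(* Consider the type with a single binary operation. For no regular variety $\mathcal{V}$ of commutative groupoids is the Mal'tsev product $\mathcal{V}\circ\mathcal{S}$ a variety. In particular neither $\mathcal{S}\circ\mathcal{S}$ nor $\mathcal{CG}\circ\mathcal{S}$ is a variety, where $\mathcal{CG}$ is the variety of commutative groupoids.
   Context: An identity is regular if exactly the same variables occur on both sides; a variety is regular if every identity it satisfies is regular. $\mathcal{S}$ is the variety of semilattices (groupoids satisfying all regular identities); it is the smallest regular variety. For a class $\mathcal{V}$ of groupoids, $\mathcal{V}\circ\mathcal{S}$ is the class of all groupoids $A$ having a congruence $\theta$ such that $A/\theta\in\mathcal{S}$ and every $\theta$-class (a subgroupoid) lies in $\mathcal{V}$. *)

From Stdlib Require Import FunctionalExtensionality PropExtensionality.

Record Groupoid : Type := {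
  carrier :> Type;
  gop : carrier -> carrier -> carrier;
  g_inh : inhabited carrier
}.

Inductive term : Type :=
| Var : nat -> term
| App : term -> term -> term.

Fixpoint eval (A : Groupoid) (v : nat -> A) (t : term) : A :=
  match t with
  | Var n => v n
  | App s u => gop A (eval A v s) (eval A v u)
  end.

Definition satisfies (A : Groupoid) (s t : term) : Prop :=
  forall v : nat -> A, eval A v s = eval A v t.

Fixpoint occurs (n : nat) (t : term) : Prop :=
  match t with
  | Var m => n = m
  | App s u => occurs n s \/ occurs n u
  end.

Definition regular_identity (s t : term) : Prop :=
  forall n, occurs n s <-> occurs n t.

Definition gclass := Groupoid -> Prop.

Definition Mod (Sigma : term -> term -> Prop) : gclass :=
  fun A => forall s t, Sigma s t -> satisfies A s t.

Definition is_variety (K : gclass) : Prop :=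
  exists Sigma : term -> term -> Prop, forall A, K A <-> Mod Sigma A.

Definition regular_variety (K : gclass) : Prop :=
  is_variety K /\
  forall s t, (forall A, K A -> satisfies A s t) -> regular_identity s t.

(* The variety of semilattices: groupoids satisfying all regular identities. *)
Definition SL : gclass := Mod regular_identity.

Definition comm_identity_l : term := App (Var 0) (Var 1).
Definition comm_identity_r : term := App (Var 1) (Var 0).
Definition CG : gclass := Mod (fun s t => s = comm_identity_l /\ t = comm_identity_r).

Definition is_congruence (A : Groupoid) (th : A -> A -> Prop) : Prop :=
  (forall x, th x x) /\
  (forall x y, th x y -> th y x) /\
  (forall x y z, th x y -> th y z -> th x z) /\
  (forall x x' y y', th x x' -> th y y' -> th (gop A x y) (gop A x' y')).

Definition qcarrier (A : Groupoid) (th : A -> A -> Prop) : Type :=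
  { Q : A -> Prop | exists a, Q = th a }.

Lemma qop_class (A : Groupoid) (th : A -> A -> Prop) (Hc : is_congruence A th)
  (Q1 Q2 : qcarrier A th) :
  exists c, (fun z => exists x y, proj1_sig Q1 x /\ proj1_sig Q2 y /\ th (gop A x y) z)
            = th c.
Proof.
  destruct Q1 as [Q1 [a Ha]], Q2 as [Q2 [b Hb]]; simpl; subst.
  destruct Hc as [Hr [Hs [Ht Hm]]].
  exists (gop A a b).
  apply functional_extensionality; intro z; apply propositional_extensionality.
  split.
  - intros [x [y [Hx [Hy Hz]]]]. eapply Ht; [apply Hm; eassumption | exact Hz].
  - intros H. exists a, b. auto.
Qed.

Definition qop (A : Groupoid) (th : A -> A -> Prop) (Hc : is_congruence A th)
  (Q1 Q2 : qcarrier A th) : qcarrier A th :=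
  exist _ (fun z => exists x y, proj1_sig Q1 x /\ proj1_sig Q2 y /\ th (gop A x y) z)
        (qop_class A th Hc Q1 Q2).

Lemma q_inh (A : Groupoid) (th : A -> A -> Prop) : inhabited (qcarrier A th).
Proof.
  destruct (g_inh A) as [a]. constructor. exists (th a). exists a. reflexivity.
Qed.

Definition quotient (A : Groupoid) (th : A -> A -> Prop) (Hc : is_congruence A th)
  : Groupoid :=
  {| carrier := qcarrier A th; gop := qop A th Hc; g_inh := q_inh A th |}.

Definition subgroupoid (A : Groupoid) (P : A -> Prop)
  (Hcl : forall x y, P x -> P y -> P (gop A x y)) (Hne : exists x, P x) : Groupoid :=
  {| carrier := { x : A | P x };
     gop := fun x y => exist P (gop A (proj1_sig x) (proj1_sig y))
                             (Hcl _ _ (proj2_sig x) (proj2_sig y));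
     g_inh := match Hne with ex_intro _ x Hx => inhabits (exist P x Hx) end |}.

Definition maltsev (V W : gclass) : gclass :=
  fun A => exists (th : A -> A -> Prop) (Hc : is_congruence A th),
    W (quotient A th Hc) /\
    forall a : A,
      exists (Hcl : forall x y, th a x -> th a y -> th a (gop A x y)),
        V (subgroupoid A (th a) Hcl (ex_intro _ a (proj1 Hc a))).

From Stdlib Require Import FunctionalExtensionality PropExtensionality ProofIrrelevance
  ClassicalEpsilon Arith.

(* A five-element groupoid A, a semilattice (levels 2 > 1 > 0) of semilattices
   {a0}, {a2 > a1}, {a4 > a3}, lies in S o S and hence in V o S.  Identifying a1
   with a4 gives a homomorphic image B.  Any semilattice quotient B/th is
   commutative, so th(b0 b1, b1 b0) = th(b3, b1) and th(b1 b2, b2 b1) = th(b2, b3);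
   thus b1 and b2 lie in one th-class, which is not commutative because
   b1 b2 = b2 <> b3 = b2 b1.  So V o S is not closed under homomorphic images. *)

Definition is_hom (A B : Groupoid) (f : A -> B) : Prop :=
  forall x y, f (gop A x y) = gop B (f x) (f y).

Lemma eval_hom (A B : Groupoid) (f : A -> B) (v : nat -> A) (t : term) :
  is_hom A B f -> f (eval A v t) = eval B (fun n => f (v n)) t.
Proof.
  intros Hf; induction t as [n | t1 IH1 t2 IH2]; simpl; [reflexivity |].
  now rewrite Hf, IH1, IH2.
Qed.

Lemma satisfies_hom_image (A B : Groupoid) (f : A -> B) (s t : term) :
  is_hom A B f -> (forall y, exists x, f x = y) ->
  satisfies A s t -> satisfies B s t.
Proof.
  intros Hf Hsurj HA v.
  set (sec := fun y => proj1_sig (constructive_indefinite_description _ (Hsurj y))).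
  assert (Hsec : forall y, f (sec y) = y)
    by (intro y; exact (proj2_sig (constructive_indefinite_description _ (Hsurj y)))).
  assert (Ev : forall u, eval B v u = f (eval A (fun n => sec (v n)) u)).
  { intro u. rewrite eval_hom by exact Hf. f_equal.
    apply functional_extensionality; intro n; symmetry; apply Hsec. }
  now rewrite !Ev, HA.
Qed.

Lemma variety_hom_image (K : gclass) (A B : Groupoid) (f : A -> B) :
  is_variety K -> is_hom A B f -> (forall y, exists x, f x = y) -> K A -> K B.
Proof.
  intros [Sig HSig] Hf Hsurj HA. apply HSig. intros s t Hst.
  apply (satisfies_hom_image A B f); [exact Hf | exact Hsurj |].
  now apply HSig.
Qed.

Lemma SL_sub_regular_variety (V : gclass) (A : Groupoid) :
  regular_variety V -> SL A -> V A.
Proof.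
  intros [[Sig HSig] Hreg] HA. apply HSig. intros s t Hst. apply HA.
  apply Hreg. intros B HB. now apply HSig.
Qed.

Lemma comm_regular : regular_identity comm_identity_l comm_identity_r.
Proof. intro n; simpl; tauto. Qed.

Definition min_hom (A : Groupoid) (g : A -> nat) : Prop :=
  forall x y, g (gop A x y) = Nat.min (g x) (g y).

(* A groupoid embedding into the chain (nat, min) is a semilattice: the value of
   a term is the minimum over the variables occurring in it. *)
Lemma SL_of_injective_min_hom (A : Groupoid) (r : A -> nat) :
  (forall x y, r x = r y -> x = y) -> min_hom A r -> SL A.
Proof.
  intros Hinj Hr.
  assert (Hlb : forall v t k,
            k <= r (eval A v t) <-> forall n, occurs n t -> k <= r (v n)).
  { intros v t; induction t as [m | t1 IH1 t2 IH2]; intro k; simpl.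
    - split; [intros H n -> | intros H; apply H]; easy.
    - rewrite Hr, Nat.min_glb_iff, IH1, IH2. firstorder. }
  intros s t Hreg v. apply Hinj, Nat.le_antisymm; apply Hlb; intros n Hn;
    apply (proj1 (Hlb v _ _) (le_n _)); now apply Hreg.
Qed.

Section Quotient.

Variables (A : Groupoid) (th : A -> A -> Prop).
Hypothesis Hc : is_congruence A th.

Definition qclass (x : A) : qcarrier A th := exist _ (th x) (ex_intro _ x eq_refl).

Definition qrep (Q : qcarrier A th) : A :=
  proj1_sig (constructive_indefinite_description _ (proj2_sig Q)).

Lemma qclass_qrep (Q : qcarrier A th) : qclass (qrep Q) = Q.
Proof.
  destruct Q as [P HP]. apply subset_eq_compat. symmetry.
  exact (proj2_sig (constructive_indefinite_description _ HP)).
Qed.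

Lemma qclass_rel (x y : A) : qclass x = qclass y -> th x y.
Proof.
  intros E. apply (f_equal (@proj1_sig _ _)) in E; simpl in E.
  rewrite E. apply (proj1 Hc).
Qed.

Lemma qop_qclass (x y : A) :
  qop A th Hc (qclass x) (qclass y) = qclass (gop A x y).
Proof.
  destruct Hc as [Hr [Hs [Ht Hm]]]. apply subset_eq_compat; simpl.
  apply functional_extensionality; intro z; apply propositional_extensionality.
  split.
  - intros [x' [y' [Hx [Hy Hz]]]]. eapply Ht; [apply Hm; eassumption | exact Hz].
  - intros H. exists x, y. auto.
Qed.

Lemma eval_quotient (v : nat -> A) (t : term) :
  eval (quotient A th Hc) (fun n => qclass (v n)) t = qclass (eval A v t).
Proof.
  induction t as [n | t1 IH1 t2 IH2]; simpl; [reflexivity |].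
  rewrite IH1, IH2. apply qop_qclass.
Qed.

Lemma quotient_satisfies_rel (s t : term) (v : nat -> A) :
  satisfies (quotient A th Hc) s t -> th (eval A v s) (eval A v t).
Proof.
  intros H. apply qclass_rel. rewrite <- !eval_quotient. apply H.
Qed.

End Quotient.

Section MinKernel.

Variables (A : Groupoid) (g : A -> nat).
Hypothesis Hg : min_hom A g.

Definition min_kernel (x y : A) : Prop := g x = g y.

Lemma min_kernel_ext (x y : A) : g x = g y -> min_kernel x = min_kernel y.
Proof.
  intros E; apply functional_extensionality; intro z; unfold min_kernel; now rewrite E.
Qed.

Lemma min_kernel_congruence : is_congruence A min_kernel.
Proof.
  unfold min_kernel; repeat split; [congruence .. |].
  intros x x' y y' Hx Hy. now rewrite !Hg, Hx, Hy.
Qed.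

Lemma min_kernel_class_closed (a x y : A) :
  min_kernel a x -> min_kernel a y -> min_kernel a (gop A x y).
Proof. unfold min_kernel; intros Hx Hy. now rewrite Hg, <- Hx, <- Hy, Nat.min_id. Qed.

Lemma min_kernel_quotient_SL (Hc : is_congruence A min_kernel) :
  SL (quotient A min_kernel Hc).
Proof.
  assert (Hgrep : forall x, g (qrep A min_kernel (qclass A min_kernel x)) = g x).
  { intro x. symmetry. apply (qclass_rel A min_kernel Hc).
    now rewrite qclass_qrep. }
  apply (SL_of_injective_min_hom (quotient A min_kernel Hc)
           (fun Q : qcarrier A min_kernel => g (qrep A min_kernel Q))).
  - intros Q1 Q2 E.
    rewrite <- (qclass_qrep A min_kernel Q1), <- (qclass_qrep A min_kernel Q2).
    apply subset_eq_compat, min_kernel_ext, E.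
  - intros Q1 Q2; simpl.
    rewrite <- (qclass_qrep A min_kernel Q1), <- (qclass_qrep A min_kernel Q2).
    now rewrite qop_qclass, !Hgrep, Hg.
Qed.

End MinKernel.

Inductive TA := a0 | a1 | a2 | a3 | a4.

Definition opA (x y : TA) : TA :=
  match x, y with
  | a0, a0 => a0 | a0, a1 => a1 | a0, a2 => a1 | a0, a3 => a3 | a0, a4 => a4
  | a1, a0 => a1 | a1, a1 => a1 | a1, a2 => a1 | a1, a3 => a3 | a1, a4 => a4
  | a2, a0 => a2 | a2, a1 => a1 | a2, a2 => a2 | a2, a3 => a3 | a2, a4 => a4
  | a3, a0 => a3 | a3, a1 => a3 | a3, a2 => a4 | a3, a3 => a3 | a3, a4 => a3
  | a4, a0 => a4 | a4, a1 => a4 | a4, a2 => a4 | a4, a3 => a3 | a4, a4 => a4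
  end.

Definition GA : Groupoid := {| carrier := TA; gop := opA; g_inh := inhabits a0 |}.

Inductive TB := b0 | b1 | b2 | b3.

Definition opB (x y : TB) : TB :=
  match x, y with
  | b0, b0 => b0 | b0, b1 => b3 | b0, b2 => b2 | b0, b3 => b3
  | b1, b0 => b1 | b1, b1 => b1 | b1, b2 => b2 | b1, b3 => b3
  | b2, b0 => b2 | b2, b1 => b3 | b2, b2 => b2 | b2, b3 => b2
  | b3, b0 => b3 | b3, b1 => b3 | b3, b2 => b2 | b3, b3 => b3
  end.

Definition GB : Groupoid := {| carrier := TB; gop := opB; g_inh := inhabits b0 |}.

Definition fAB (x : TA) : TB :=
  match x with a0 => b0 | a1 => b3 | a2 => b1 | a3 => b2 | a4 => b3 end.

Lemma fAB_hom : is_hom GA GB fAB.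
Proof. intros [] []; reflexivity. Qed.

Lemma fAB_surj : forall y : TB, exists x, fAB x = y.
Proof. intros []; [exists a0 | exists a2 | exists a3 | exists a1]; reflexivity. Qed.

(* [level] is the semilattice quotient of A; [height] orders each level. *)
Definition level (x : TA) : nat :=
  match x with a0 => 2 | a1 | a2 => 1 | a3 | a4 => 0 end.
Definition height (x : TA) : nat :=
  match x with a0 | a1 | a3 => 0 | a2 | a4 => 1 end.

Lemma level_min_hom : min_hom GA level.
Proof. intros [] []; reflexivity. Qed.

Lemma level_class_SL (a : GA) Hcl Hne :
  SL (subgroupoid GA (min_kernel GA level a) Hcl Hne).
Proof.
  apply (SL_of_injective_min_hom (subgroupoid GA (min_kernel GA level a) Hcl Hne)
           (fun x : {x : TA | min_kernel GA level a x} => height (proj1_sig x))).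
  - intros [x Hx] [y Hy] E; unfold min_kernel in *; simpl in *.
    assert (x = y) as -> by (destruct a, x, y; simpl in *; congruence).
    f_equal; apply proof_irrelevance.
  - intros [x Hx] [y Hy]; unfold min_kernel in *; simpl in *.
    destruct a, x, y; simpl in *; congruence.
Qed.

Lemma GA_in_maltsev (V : gclass) : regular_variety V -> maltsev V SL GA.
Proof.
  intros HV.
  exists (min_kernel GA level), (min_kernel_congruence GA level level_min_hom).
  split; [apply min_kernel_quotient_SL, level_min_hom |].
  intros a. exists (min_kernel_class_closed GA level level_min_hom a).
  apply SL_sub_regular_variety; [exact HV | apply level_class_SL].
Qed.

Lemma GB_not_in_maltsev (V : gclass) :
  (forall A, V A -> CG A) -> ~ maltsev V SL GB.
Proof.
  intros HVCG [th [Hc [HQ Hcls]]].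
  assert (Hcomm : forall x y : TB, th (opB x y) (opB y x)).
  { intros x y.
    exact (quotient_satisfies_rel GB th Hc _ _ (fun n => match n with 0 => x | _ => y end)
             (HQ _ _ comm_regular)). }
  pose proof Hc as [Hr [Hs [Ht _]]].
  assert (H12 : th b1 b2) by exact (Ht _ _ _ (Hs _ _ (Hcomm b0 b1)) (Hs _ _ (Hcomm b1 b2))).
  destruct (Hcls b1) as [Hcl HV1].
  pose proof (HVCG _ HV1 _ _ (conj eq_refl eq_refl)
    (fun n => match n with 0 => exist (th b1) b1 (Hr b1) | _ => exist (th b1) b2 H12 end))
    as E.
  apply (f_equal (@proj1_sig _ _)) in E. discriminate E.
Qed.

Theorem corollary4p16 :
  forall V : gclass,
    regular_variety V ->
    (forall A, V A -> CG A) ->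
    ~ is_variety (maltsev V SL).
Proof.
  intros V HV HVCG Hvar.
  apply (GB_not_in_maltsev V HVCG).
  apply (variety_hom_image _ GA GB fAB Hvar fAB_hom fAB_surj).
  exact (GA_in_maltsev V HV).
Qed.
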